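(* Let $n\ge1$ and $k\ge1$ be integers. Then $$|\mathrm{SVT}((k),n)|=\binom{n+k-1}{k}\,{}_2F_1\!\left(\begin{matrix}k,\;1-n\\ k+1\end{matrix};-1\right).$$
   Context: Let $[n]=\{1,\dots,n\}$. For a partition $\lambda$ with at most $n$ nonzero parts, identified with its Young diagram $\{(i,j): 1\le j\le\lambda_i\}$ (row index $i$ increasing downward, column index $j$ to the right), a set-valued tableau of shape $\lambda$ with entries in $[n]$ assigns to every box $(i,j)$ a nonempty subset $T_{i,j}\subseteq[n]$ such that $\max T_{i,j}\le\min T_{i,j+1}$ and $\max T_{i,j}<\min T_{i+1,j}$ whenever these boxes exist; $\mathrm{SVT}(\lambda,n)$ is the set of these tableaux, and $(k)$ is the one-row partition with $k$ boxes. $(a)_0=1$, $(a)_m=a(a+1)\cdots(a+m-1)$, and ${}_2F_1\!\left(\begin{smallmatrix}a,\,b\\ c\end{smallmatrix};z\right)=\sum_{m\ge0}\frac{(a)_m(b)_m}{(c)_m}\frac{z^m}{m!}$, a finite sum when $b$ is a nonpositive integer. *)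

From mathcomp Require Import all_boot all_order all_algebra.
Set Implicit Arguments. Unset Strict Implicit. Unset Printing Implicit Defensive.
Import GRing.Theory Num.Theory.

Definition is_partition (lam : seq nat) : bool :=
  sorted geq lam && all (fun p => 0 < p) lam.

(* Boxes are 0-indexed: (i, j) with i < size lam and j < lam_i. *)
Definition in_diagram (lam : seq nat) (i j : nat) : bool :=
  (i < size lam) && (j < nth 0 lam i).

(* Entries in [n] = {1..n} are encoded by 'I_n (value v stands for v+1);
   this shift is order-preserving, so the tableau conditions are unchanged.
   A set-valued tableau of shape lam is stored as a finite function on the
   bounding rectangle 'I_(size lam) x 'I_(lam_1); boxes outside the diagram
   are required to carry the empty set, so these functions are in bijection
   with set-valued tableaux. *)
Definition svt_box_type (lam : seq nat) := ('I_(size lam) * 'I_(head 0 lam))%type.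

Definition is_svt (lam : seq nat) (n : nat)
    (T : {ffun svt_box_type lam -> {set 'I_n}}) : bool :=
  [forall b : svt_box_type lam,
     let i := val b.1 in let j := val b.2 in
     if in_diagram lam i j then
       [&& T b != set0,
           [forall b' : svt_box_type lam,
              ((val b'.1 == i) && (val b'.2 == j.+1)) ==>
              [forall x in T b, forall y in T b', (val x <= val y)%N]] &
           [forall b' : svt_box_type lam,
              ((val b'.1 == i.+1) && (val b'.2 == j) && in_diagram lam i.+1 j) ==>
              [forall x in T b, forall y in T b', (val x < val y)%N]]]
     else T b == set0].

Definition SVT (lam : seq nat) (n : nat) : {set {ffun svt_box_type lam -> {set 'I_n}}} :=
  [set T | is_svt T].

Definition pochhammer {R : ringType} (a : R) (m : nat) : R :=
  \prod_(i < m) (a + i%:R).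

Definition hyp2F1_term {R : fieldType} (a b c z : R) (m : nat) : R :=
  pochhammer a m * pochhammer b m / pochhammer c m * (z ^+ m / (m`!)%:R).

(* Terminating Gauss hypergeometric series for b = -N (N : nat):
   all terms with m > N vanish since (b)_m = 0, so the series is
   the finite sum over m = 0..N. *)
Definition hyp2F1_terminating {R : fieldType} (a : R) (N : nat) (c z : R) : R :=
  \sum_(m < N.+1) hyp2F1_term a (- (N%:R)) c z m.

From mathcomp Require Import all_boot all_order all_algebra.
From mathcomp Require Import zify ring.
Import GRing.Theory Num.Theory.
Set Implicit Arguments. Unset Strict Implicit. Unset Printing Implicit Defensive.

(* A one-row set-valued tableau is a row of nonempty sets T_1, ..., T_k with
   max T_j <= min T_(j+1).  Let a(m, l) count such rows of length l with entries
   below m.  Classifying the rows with entries below m+1 by the role of the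
   largest possible entry m (absent, alone in the last box, or sharing the last
   box) gives a(m+1, l+1) = 2 a(m, l+1) + a(m+1, l), with a(m, 0) = 1 and
   a(0, l+1) = 0.  Hence a(m, l+1) = sum_(i<m) 2^i C(i+l, l), which equals
   sum_j C(m+l, l+1+j) C(l+j, j); and C(n+k+1, k+1) times the j-th term of
   2F1(k+1, -n; k+2; -1) is exactly C(n+k+1, k+1+j) C(k+j, j). *)

Lemma card_in_bij (T U : finType) (A : {set T}) (B : {set U}) (f : T -> U) (g : U -> T) :
  {in A, forall x, f x \in B} -> {in B, forall y, g y \in A} ->
  {in A, cancel f g} -> {in B, cancel g f} -> #|A| = #|B|.
Proof.
move=> fA gB fK gK; rewrite -(card_in_imset (can_in_inj fK)); apply: eq_card => y.
apply/imsetP/idP => [[x xA ->] | yB]; first exact: fA.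
by exists (g y); rewrite ?gK ?gB.
Qed.

Lemma bin_trinomial n k j : 'C(n + k, k) * 'C(n, j) = 'C(n + k, k + j) * 'C(k + j, j).
Proof.
have [jn|nj] := leqP j n; last first.
  by rewrite (bin_small nj) (@bin_small (n + k) (k + j)) ?muln0 ?mul0n //; lia.
have facts_gt0 : 0 < k`! * j`! * (n - j)`! by rewrite !muln_gt0 !fact_gt0.
apply/eqP; rewrite -(eqn_pmul2r facts_gt0); apply/eqP.
have Fk : 'C(n + k, k) * (k`! * n`!) = (n + k)`!.
  by have := bin_fact (leq_addl n k); rewrite addnK.
have Fj : 'C(k + j, j) * (j`! * k`!) = (k + j)`!.
  by have := bin_fact (leq_addl k j); rewrite addnK.
have Fkj : 'C(n + k, k + j) * ((k + j)`! * (n - j)`!) = (n + k)`!.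
  have e : n + k - (k + j) = n - j by lia.
  by rewrite -e bin_fact // addnC leq_add2r.
have Fn := bin_fact jn.
transitivity ('C(n + k, k) * (k`! * n`!)); first by rewrite -Fn; ring.
rewrite Fk -Fkj -Fj; ring.
Qed.

Lemma sum_bin m : \sum_(j < m.+1) 'C(m, j) = 2 ^ m.
Proof.
rewrite -[2]/(1 + 1) expnDn; apply: eq_bigr => j _.
by rewrite !exp1n !muln1.
Qed.

Definition geobin_sum m l := \sum_(i < m) 2 ^ i * 'C(i + l, l).

Lemma geobin_sum0 m : (geobin_sum m 0).+1 = 2 ^ m.
Proof.
elim: m => [|m IH]; first by rewrite /geobin_sum big_ord0.
by rewrite /geobin_sum big_ord_recr -/(geobin_sum m 0) /= bin0 muln1 expnS; lia.
Qed.

Lemma geobin_sum0S m : geobin_sum m.+1 0 = (geobin_sum m 0).*2.+1.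
Proof. by have := geobin_sum0 m.+1; rewrite expnS -geobin_sum0; lia. Qed.

Lemma geobin_sumSS m l : geobin_sum m.+1 l.+1 = (geobin_sum m l.+1).*2 + geobin_sum m.+1 l.
Proof.
rewrite /geobin_sum !big_ord_recl /= !expn0 !mul1n !add0n !binn.
rewrite -mul2n big_distrr addnCA -big_split /=; congr (1 + _).
apply: eq_bigr => i _; rewrite /bump /= add1n expnS addSn binS addnS addSn.
ring.
Qed.

Lemma geobin_sumE m l : geobin_sum m l = \sum_(j < m) 'C(m + l, l.+1 + j) * 'C(l + j, j).
Proof.
elim: m => [|m IH]; first by rewrite /geobin_sum !big_ord0.
rewrite /geobin_sum big_ord_recr /= -/(geobin_sum m l) IH.
under [RHS]eq_bigr => j _ do rewrite !addSn binS mulnDl.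
rewrite big_split /= big_ord_recr /= (@bin_small (m + l) (l + m).+1) ?mul0n ?addn0; last by lia.
under eq_bigr => j _ do rewrite addSn.
congr (_ + _); rewrite -sum_bin big_distrl /=.
by apply: eq_bigr => j _; rewrite mulnC bin_trinomial.
Qed.

Section RowChains.
Variables N K : nat.
Local Notation row := {ffun 'I_K -> {set 'I_N}}.
Implicit Types (f g : row) (n k : nat).

(* Rows of k nonempty sets with entries below n, padded with empty sets up to the
   fixed length K: fixing the ambient types lets n and k vary in the recursion. *)
Definition row_chain n k f : bool :=
  [&& [forall j : 'I_K, (j < k) == (f j != set0)],
      [forall j : 'I_K, forall x in f j, x < n] &
      [forall j1 : 'I_K, forall j2 : 'I_K, (j2 == j1.+1 :> nat) ==>
         [forall x in f j1, forall y in f j2, x <= y]]].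

Lemma row_chainP n k f :
  reflect [/\ forall j : 'I_K, (j < k) = (f j != set0),
              forall j (x : 'I_N), x \in f j -> x < n &
              forall (j1 j2 : 'I_K) (x y : 'I_N),
                j2 = j1.+1 :> nat -> x \in f j1 -> y \in f j2 -> x <= y]
          (row_chain n k f).
Proof.
apply: (iffP and3P) => [[/forallP ne /forallP lt /forallP le] | [ne lt le]]; split.
- by move=> j; have /eqP := ne j.
- by move=> j; apply/forall_inP/lt.
- move=> j1 j2 x y /eqP e xf yf.
  by have /forallP/(_ j2)/implyP/(_ e)/forall_inP/(_ x xf)/forall_inP-> := le j1.
- by apply/forallP => j; rewrite ne.
- by apply/forallP => j; apply/forall_inP/lt.
- apply/forallP => j1; apply/forallP => j2; apply/implyP => /eqP e.
  by apply/forall_inP => x xf; apply/forall_inP => y yf; apply: le e xf yf.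
Qed.

Lemma row_chain_mono n k f (j1 j2 : 'I_K) (x y : 'I_N) :
  row_chain n k f -> j1 < j2 < k -> x \in f j1 -> y \in f j2 -> x <= y.
Proof.
case/row_chainP=> ne _ le /andP[lt12 lt2k] xf.
have [d e] : exists d, j2 = j1 + d.+1 :> nat by exists (j2 - j1.+1); lia.
elim: d j2 e lt2k y {lt12} => [|d IH] j2 e lt2k y yf.
  by apply: le xf yf; rewrite e addn1.
have lt_pred : j1 + d.+1 < K by have := ltn_ord j2; lia.
have /set0Pn[z zf] : f (Ordinal lt_pred) != set0 by rewrite -ne /=; lia.
by apply: leq_trans (IH (Ordinal lt_pred) erefl _ z zf) (le _ _ _ _ _ zf yf) => /=; lia.
Qed.

Lemma row_chain_bound n n' k f :
  row_chain n' k f -> (forall j x, x \in f j -> x < n) -> row_chain n k f.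
Proof. by case/row_chainP=> ne _ le lt; apply/row_chainP; split. Qed.

Definition row_count n k := #|[set f | row_chain n k f]|.

Lemma row_count_n0 n : row_count n 0 = 1.
Proof.
rewrite /row_count -(cards1 ([ffun=> set0] : row)); apply: eq_card => f; rewrite !inE.
apply/row_chainP/eqP => [[ne _ _] | ->].
  by apply/ffunP => j; rewrite ffunE; apply/eqP; rewrite -[_ == _]negbK -ne.
by split=> [j|j x|j1 j2 x y _]; rewrite ffunE ?eqxx ?inE.
Qed.

Lemma row_count_0n k : 0 < k -> 0 < K -> row_count 0 k = 0.
Proof.
move=> k_gt0 K_gt0; apply: eq_card0 => f; rewrite inE.
apply/row_chainP => -[ne lt _].
have /set0Pn[x /lt//] : f (Ordinal K_gt0) != set0 by rewrite -ne.
Qed.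

Section LastBox.
Variables (l : nat) (l_lt_K : l < K).
Let q := Ordinal l_lt_K.

Definition set_last f v : row := [ffun j => if j == q then v else f j].

Lemma set_last_q f v : set_last f v q = v.
Proof. by rewrite ffunE eqxx. Qed.

Lemma set_last_neq f v j : j != q -> set_last f v j = f j.
Proof. by rewrite ffunE => /negbTE->. Qed.

Lemma set_lastK f v w : set_last (set_last f v) w = set_last f w.
Proof. by apply/ffunP => j; rewrite !ffunE; case: eqP. Qed.

Lemma set_last_id f : set_last f (f q) = f.
Proof. by apply/ffunP => j; rewrite ffunE; case: eqP => [->|]. Qed.

Lemma neq_last j : (j != q) = (j != l :> nat).
Proof. by []. Qed.

Lemma row_chain_set_last n f v :
  row_chain n l.+1 (set_last f v) <->
  [/\ row_chain n l (set_last f set0), v != set0, (forall y : 'I_N, y \in v -> y < n) &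
      forall (j : 'I_K) (x y : 'I_N), j.+1 = l -> x \in f j -> y \in v -> x <= y].
Proof.
split=> [/row_chainP[ne lt le] | [/row_chainP[ne lt le] v0 vlt vle]].
  split; [apply/row_chainP; split | | |].
  - move=> j; case: (eqVneq j q) => [->|jq]; first by rewrite set_last_q eqxx ltnn.
    rewrite !set_last_neq // -(set_last_neq f v jq) -ne; move: jq; rewrite neq_last; lia.
  - move=> j x; case: (eqVneq j q) => [->|jq]; first by rewrite set_last_q inE.
    by rewrite set_last_neq // -(set_last_neq f v jq); apply: lt.
  - move=> j1 j2 x y e; case: (eqVneq j1 q) => [->|jq1]; first by rewrite set_last_q inE.
    case: (eqVneq j2 q) => [->|jq2]; first by rewrite set_last_q inE.
    by rewrite !set_last_neq // -(set_last_neq f v jq1) -(set_last_neq f v jq2); apply: le.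
  - by rewrite -(set_last_q f v) -ne.
  - by move=> y; rewrite -{1}(set_last_q f v); apply: lt.
  - move=> j x y e; have jq : j != q by rewrite neq_last -e neq_ltn ltnSn.
    by rewrite -(set_last_neq f v jq) -{2}(set_last_q f v); apply: le.
apply/row_chainP; split.
- move=> j; case: (eqVneq j q) => [->|jq]; first by rewrite set_last_q ltnSn.
  rewrite set_last_neq // -(set_last_neq f set0 jq) -ne; move: jq; rewrite neq_last; lia.
- move=> j x; case: (eqVneq j q) => [->|jq]; first by rewrite set_last_q; apply: vlt.
  by rewrite set_last_neq // -(set_last_neq f set0 jq); apply: lt.
- move=> j1 j2 x y e; case: (eqVneq j2 q) => [e2|jq2].
    have e1 : j1.+1 = l by rewrite -e e2.
    have jq1 : j1 != q by rewrite neq_last -e1 neq_ltn ltnSn.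
    by rewrite e2 set_last_q set_last_neq //; apply: vle.
  case: (eqVneq j1 q) => [e1|jq1]; last first.
    by rewrite !set_last_neq // -(set_last_neq f set0 jq1) -(set_last_neq f set0 jq2); apply: le.
  rewrite (set_last_neq _ _ jq2) -(set_last_neq f set0 jq2) => _ yf.
  have : j2 < l by rewrite ne; apply/set0Pn; exists y.
  by rewrite e e1 /= ltnNge leqnSn.
Qed.

Lemma set_last_set0 n f : row_chain n l f -> set_last f set0 = f.
Proof.
case/row_chainP=> ne _ _; rewrite -{2}(set_last_id f); congr set_last.
by apply/esym/eqP; rewrite -[_ == _]negbK -ne ltnn.
Qed.

Lemma row_chain_below_last n f j (x y : 'I_N) :
  row_chain n l.+1 f -> j != q -> x \in f j -> y \in f q -> x <= y.
Proof.
move=> fc jq xf yf; have /row_chainP[ne _ _] := fc.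
apply: (row_chain_mono fc _ xf yf); rewrite /= ltnSn andbT.
have : j < l.+1 by rewrite ne; apply/set0Pn; exists x.
by move: jq; rewrite neq_last; lia.
Qed.

Section MaxEntry.
Variables (m : nat) (m_lt_N : m < N).
Let p := Ordinal m_lt_N.

Lemma ltn_neq_max (x : 'I_N) : x < m.+1 -> x != p -> x < m.
Proof.
move=> + xp; rewrite ltnS leq_eqVlt => /orP[/eqP e|//].
by case/eqP: xp; apply: val_inj.
Qed.

Let V := [set f : row | row_chain m.+1 l.+1 f].
Let A := [set f : row | p \in f q].
Let B := [set f : row | f q == [set p]].

Lemma card_max_absent : #|V :\: A| = row_count m l.+1.
Proof.
apply: eq_card => f; rewrite !inE andbC; apply/andP/idP => [[fc pf] | fc].
  have /row_chainP[ne lt _] := fc; apply: (row_chain_bound fc) => j x xf.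
  case: (eqVneq j q) => [ejq|jq].
    by apply: (ltn_neq_max (lt _ _ xf)); apply: contraNneq pf => xp; rewrite -xp -ejq.
  have /set0Pn[y yf] : f q != set0 by rewrite -ne ltnSn.
  apply: (leq_ltn_trans (row_chain_below_last fc jq xf yf) (ltn_neq_max (lt _ _ yf) _)).
  by apply: contraNneq pf => <-.
have /row_chainP[_ lt _] := fc; split.
  by apply: row_chain_bound fc _ => j x /lt/ltnW.
by apply/negP => /lt; rewrite ltnn.
Qed.

Lemma card_max_alone : #|V :&: A :&: B| = row_count m.+1 l.
Proof.
apply: (card_in_bij (f := set_last^~ set0) (g := set_last^~ [set p])).
- move=> f; rewrite !inE => /andP[/andP[fc _] _].
  by move: fc; rewrite -{1}(set_last_id f) => /row_chain_set_last[].
- move=> g; rewrite !inE => gc; rewrite set_last_q set11 eqxx !andbT.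
  have /row_chainP[_ lt _] := gc.
  apply/row_chain_set_last; split.
  + by rewrite (set_last_set0 gc).
  + by apply/set0Pn; exists p; rewrite set11.
  + by move=> y /set1P->.
  + by move=> j x y _ xg /set1P->; apply: lt _ _ xg.
- by move=> f; rewrite !inE => /andP[_ /eqP fq]; rewrite set_lastK -fq set_last_id.
- by move=> g; rewrite inE => gc; rewrite set_lastK (set_last_set0 gc).
Qed.

Lemma card_max_shared : #|V :&: A :\: B| = row_count m l.+1.
Proof.
apply: (card_in_bij (f := fun f => set_last f (f q :\ p))
                    (g := fun g => set_last g (p |: g q))).
- move=> f; rewrite !inE => /andP[fqp /andP[fc pf]].
  have := fc; rewrite -{1}(set_last_id f) => /row_chain_set_last[fc0 _ flt fle].
  have /set0Pn[z zf] : f q :\ p != set0.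
    by apply: contraNneq fqp => fp0; rewrite -(setD1K pf) fp0 setU0.
  have /setD1P[zp zq] := zf; have z_lt := ltn_neq_max (flt _ zq) zp.
  apply/row_chain_set_last; split.
  + apply: row_chain_bound fc0 _ => j x; case: (eqVneq j q) => [->|jq].
      by rewrite set_last_q inE.
    by rewrite set_last_neq // => xf; apply: (leq_ltn_trans (row_chain_below_last fc jq xf zq)).
  + by apply/set0Pn; exists z.
  + by move=> y /setD1P[yp yf]; apply: (ltn_neq_max (flt _ yf) yp).
  + by move=> j x y e xf /setD1P[_ yf]; apply: fle e xf yf.
- move=> g; rewrite !inE => gc; rewrite set_last_q setU11 andbT.
  have /row_chainP[_ lt _] := gc.
  have := gc; rewrite -{1}(set_last_id g) => /row_chain_set_last[gc0 g0 glt gle].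
  apply/andP; split.
    apply/negP => /eqP gp; case/set0Pn: g0 => y yg.
    have : y \in [set p] by rewrite -gp setU1r.
    by move/set1P => yp; move: (glt _ yg); rewrite yp ltnn.
  apply/row_chain_set_last; split.
  + by have /row_chainP[_ lt0 _] := gc0; apply: row_chain_bound gc0 _ => j x /lt0/ltnW.
  + by apply/set0Pn; exists p; rewrite setU11.
  + by move=> y /setU1P[-> | /glt/ltnW //]; apply: ltnSn.
  + move=> j x y e xg /setU1P[-> | yg]; last by apply: gle e xg yg.
    exact: ltnW (lt _ _ xg).
- move=> f; rewrite !inE => /andP[_ /andP[_ pf]].
  by rewrite set_lastK set_last_q setD1K // set_last_id.
- move=> g; rewrite inE => gc; have /row_chainP[_ lt _] := gc.
  have pg : p \notin g q by apply/negP => /lt; rewrite ltnn.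
  by rewrite set_lastK set_last_q setU1K // set_last_id.
Qed.

Lemma row_count_SS : row_count m.+1 l.+1 = (row_count m l.+1).*2 + row_count m.+1 l.
Proof.
rewrite {1}/row_count -/V -(cardsID A V) -(cardsID B (V :&: A)).
by rewrite card_max_alone card_max_shared card_max_absent -addnn; lia.
Qed.

End MaxEntry.
End LastBox.

Lemma row_count_geobin m l : m <= N -> l < K -> row_count m l.+1 = geobin_sum m l.
Proof.
elim: m l => [|m IH] l mN lK.
  by rewrite row_count_0n ?(leq_ltn_trans (leq0n l) lK) // /geobin_sum big_ord0.
elim: l lK => [|l IHl] lK; rewrite (row_count_SS lK mN) IH ?(ltnW mN) //.
  by rewrite row_count_n0 geobin_sum0S addn1.
by rewrite IHl ?(ltnW lK) // geobin_sumSS.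
Qed.

End RowChains.

Section OneRowSVT.
Variables n k : nat.

Definition row_of_svt (T : {ffun svt_box_type [:: k] -> {set 'I_n}}) :
  {ffun 'I_k -> {set 'I_n}} := [ffun j => T (ord0, j)].

Definition svt_of_row (f : {ffun 'I_k -> {set 'I_n}}) :
  {ffun svt_box_type [:: k] -> {set 'I_n}} := [ffun b => f b.2].

Lemma row_of_svtK : cancel svt_of_row row_of_svt.
Proof. by move=> f; apply/ffunP => j; rewrite !ffunE. Qed.

Lemma svt_of_rowK : cancel row_of_svt svt_of_row.
Proof. by move=> T; apply/ffunP => -[i j]; rewrite !ffunE [i]ord1. Qed.

Lemma is_svt_row T : is_svt T = row_chain n k (row_of_svt T).
Proof.
apply/forallP/row_chainP => [svt | [ne _ le] [i j]].
  split=> [j | j x _ | j1 j2 x y e]; rewrite ?ffunE ?ltn_ord //.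
    by have := svt (ord0, j); rewrite /in_diagram /= ltn_ord => /and3P[].
  have := svt (ord0, j1); rewrite /in_diagram /= ltn_ord => /and3P[_ /forallP/(_ (ord0, j2)) + _].
  by rewrite /= e eqxx => /forall_inP H /H/forall_inP; apply.
rewrite [i]ord1 /in_diagram /= ltn_ord; apply/and3P; split.
- by have := ne j; rewrite ltn_ord ffunE => <-.
- apply/forallP => -[i' j'] /=; rewrite [i']ord1 /=; apply/implyP => /eqP e.
  apply/forall_inP => x xT; apply/forall_inP => y yT.
  by apply: (le j j' x y e); rewrite ffunE.
- by apply/forallP => b'; rewrite andbF.
Qed.

Lemma card_SVT_one_row : #|SVT [:: k] n| = row_count n k n k.
Proof.
apply: (card_in_bij (f := row_of_svt) (g := svt_of_row)) => [T | f | T _ | f _].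
- by rewrite !inE -is_svt_row.
- by rewrite !inE is_svt_row row_of_svtK.
- exact: svt_of_rowK.
- exact: row_of_svtK.
Qed.

End OneRowSVT.

Local Open Scope ring_scope.

Lemma pochhammerSr (R : nzRingType) (a : R) j : pochhammer a j.+1 = pochhammer a j * (a + j%:R).
Proof. by rewrite /pochhammer big_ord_recr. Qed.

Lemma pochhammerSl (R : nzRingType) (a : R) j : pochhammer a j.+1 = a * pochhammer (a + 1) j.
Proof.
rewrite /pochhammer big_ord_recl addr0; congr (_ * _).
by apply: eq_bigr => i _; rewrite lift0 -natr1 addrA addrAC.
Qed.

Lemma pochhammer_nat (R : nzRingType) (c j : nat) :
  pochhammer (c%:R : R) j = (\prod_(i < j) (c + i))%:R.
Proof. by rewrite natr_prod; apply: eq_bigr => i _; rewrite natrD. Qed.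

Lemma pochhammer_oppn (R : comNzRingType) (N j : nat) : (j <= N)%N ->
  pochhammer (- N%:R : R) j = (-1) ^+ j * (N ^_ j)%:R.
Proof.
elim: j => [|j IH] le_jN; first by rewrite /pochhammer big_ord0 expr0 mul1r ffactn0.
by rewrite pochhammerSr IH 1?ltnW // ffactnSr natrM natrB 1?ltnW // exprS; ring.
Qed.

Lemma hyp2F1_term_bin (R : numFieldType) (n k j : nat) : (j <= n)%N ->
  hyp2F1_term (k.+1%:R : R) (- n%:R) k.+2%:R (-1) j =
    k.+1%:R / (k.+1 + j)%:R * 'C(n, j)%:R.
Proof.
move=> le_jn; rewrite /hyp2F1_term pochhammer_oppn // -bin_ffact natrM.
have shift : pochhammer (k.+1%:R : R) j * (k.+1 + j)%:R = k.+1%:R * pochhammer k.+2%:R j.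
  by rewrite natrD -pochhammerSr pochhammerSl natr1.
have sign2 : (-1) ^+ j * (-1) ^+ j = 1 :> R by rewrite -exprMn mulrNN mulr1 expr1n.
have poch_neq0 : pochhammer (k.+2%:R : R) j != 0.
  by rewrite pochhammer_nat pnatr_eq0 -lt0n prodn_gt0.
have fact_neq0 : j`!%:R != 0 :> R by rewrite pnatr_eq0 -lt0n fact_gt0.
have denom_neq0 : (k.+1 + j)%:R != 0 :> R by rewrite pnatr_eq0.
have -> : pochhammer (k.+1%:R : R) j = k.+1%:R * pochhammer k.+2%:R j / (k.+1 + j)%:R.
  by rewrite -shift mulfK.
transitivity (k.+1%:R / (k.+1 + j)%:R * 'C(n, j)%:R * ((-1) ^+ j * (-1) ^+ j) : R).
  by field; rewrite nat1r -natrD denom_neq0 fact_neq0 poch_neq0.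
by rewrite sign2 mulr1.
Qed.

Lemma bin_trinomial_absorb n k j :
  ((k.+1 + j) * ('C(n.+1 + k, k.+1 + j) * 'C(k + j, j)) = 'C(n.+1 + k, k.+1) * k.+1 * 'C(n, j))%N.
Proof.
have absorb_kj := mul_bin_diag (n + k).+1 (k + j).
have absorb_k := mul_bin_diag (n + k).+1 k.
rewrite !addSn mulnA -absorb_kj -mulnA -bin_trinomial mulnA absorb_k.
by rewrite [(k.+1 * _)%N]mulnC.
Qed.

Lemma bin_mul_hyp2F1_term (R : numFieldType) (n k j : nat) : (j <= n)%N ->
  'C(n.+1 + k, k.+1)%:R * hyp2F1_term (k.+1%:R : R) (- n%:R) k.+2%:R (-1) j =
    ('C(n.+1 + k, k.+1 + j) * 'C(k + j, j))%:R.
Proof.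
move=> le_jn; have denom_neq0 : (k.+1 + j)%:R != 0 :> R by rewrite pnatr_eq0.
apply: (mulfI denom_neq0); rewrite hyp2F1_term_bin // -natrM bin_trinomial_absorb !natrM.
by field; rewrite nat1r -natrD.
Qed.

Theorem corollary3p3 (n k : nat) (hn : (1 <= n)%N) (hk : (1 <= k)%N) :
  (#|SVT [:: k] n|)%:R =
    ('C(n + k - 1, k))%:R *
      hyp2F1_terminating (k%:R : rat) n.-1 (k.+1)%:R (-1).
Proof.
case: n hn => [//|n] _; case: k hk => [//|k] _.
rewrite card_SVT_one_row row_count_geobin // geobin_sumE /hyp2F1_terminating /=.
rewrite (_ : n.+1 + k.+1 - 1 = n.+1 + k)%N; last by lia.
rewrite natr_sum mulr_sumr; apply: eq_bigr => j _.
by rewrite bin_mul_hyp2F1_term // -ltnS.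
Qed.
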